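(* Let $A,B,C,Y\in\mathbb{R}^{n\times n}$ and define the componentwise backward error $$\mu(Y)=\min\{\epsilon\ge0:\ (A+\Delta A)Y+Y^{\top}(B+\Delta B)^{\top}=C+\Delta C,\ |\Delta A|\le\epsilon|A|,\ |\Delta B|\le\epsilon|B|,\ |\Delta C|\le\epsilon|C|\},$$ where the inequalities between matrices are entrywise and $|M|=(|m_{ij}|)$. Let $D_1=\mathrm{diag}(\mathrm{vec}(A))$, $D_2=\mathrm{diag}(\mathrm{vec}(B))$, $D_3=\mathrm{diag}(\mathrm{vec}(C))$, $$H=[\,(Y^{\top}\otimes I)D_1,\ (I\otimes Y^{\top})\Pi D_2,\ -D_3\,]\in\mathbb{R}^{n^2\times 3n^2},\qquad \widetilde R=C-AY-Y^{\top}B^{\top},\qquad r=\mathrm{vec}(\widetilde R).$$ Assume $H$ has full (row) rank $n^2$, and let $H^{\top}=Q\begin{bmatrix}R\\0\end{bmatrix}$ be a QR decomposition with $Q\in\mathbb{R}^{3n^2\times3n^2}$ orthogonal and $R\in\mathbb{R}^{n^2\times n^2}$ upper triangular (nonsingular). Set $\bar z_1=R^{-\top}r$ and $$\overline{\mu}(Y)=\left\|Q\begin{bmatrix}\bar z_1\\0\end{bmatrix}\right\|_\infty .$$ Then $$\mu(Y)\le\overline{\mu}(Y)\le\sqrt{3}\,n\,\mu(Y).$$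
   Context: $\mathrm{vec}(M)$ stacks the columns of $M$ into a vector; $\mathrm{diag}(v)$ is the diagonal matrix with diagonal $v$; $\otimes$ is the Kronecker product; $I$ is the $n\times n$ identity; $\Pi$ is the $n^2\times n^2$ permutation matrix with $\Pi\,\mathrm{vec}(M)=\mathrm{vec}(M^{\top})$ for all $M\in\mathbb{R}^{n\times n}$. $\|\cdot\|_\infty$ is the vector max-norm. (When $H$ is rank-deficient, $\mu(Y)$ is regarded as infinite.) *)

From HB Require Import structures.
From mathcomp Require Import all_boot all_order all_algebra.
Set Implicit Arguments. Unset Strict Implicit. Unset Printing Implicit Defensive.
Import Order.TTheory GRing.Theory Num.Theory.
Local Open Scope ring_scope.

(* decomposition of an index of 'I_(m*n) into the pair (i,j) with value i*n+j
   (inverse of mxvec_index) *)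
Definition vidx (m n : nat) (x : 'I_(m * n)) : 'I_m * 'I_n :=
  enum_val (cast_ord (esym (mxvec_cast m n)) x).

(* vec M : stacks the columns of M (column-major), entry (i,j) at index j*n+i *)
Definition vec (R : Type) (m n : nat) (M : 'M[R]_(m, n)) : 'cV[R]_(n * m) :=
  (mxvec M^T)^T.

Definition kron (R : pzRingType) (p q r s : nat) (A : 'M[R]_(p, q)) (B : 'M[R]_(r, s))
  : 'M[R]_(p * r, q * s) :=
  \matrix_(x, y) (A (vidx x).1 (vidx y).1 * B (vidx x).2 (vidx y).2).

(* The vec-permutation (commutation) matrix Pi: Pi *m vec M = vec M^T *)
Definition vecperm (R : pzRingType) (n : nat) : 'M[R]_(n * n) :=
  \matrix_(x, y) ((vidx x == ((vidx y).2, (vidx y).1))%:R).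

Definition diagv (R : pzRingType) (k : nat) (v : 'cV[R]_k) : 'M[R]_k := diag_mx v^T.

Definition norminf (R : realDomainType) (k : nat) (v : 'cV[R]_k) : R :=
  \big[Num.max/0]_(i < k) `|v i 0|.

Definition feasible (R : realDomainType) (n : nat) (A B C Y : 'M[R]_n) (eps : R) : Prop :=
  0 <= eps /\
  exists dA dB dC : 'M[R]_n,
    (A + dA) *m Y + Y^T *m (B + dB)^T = C + dC /\
    (forall i j, `|dA i j| <= eps * `|A i j|) /\
    (forall i j, `|dB i j| <= eps * `|B i j|) /\
    (forall i j, `|dC i j| <= eps * `|C i j|).

Definition is_min (R : realDomainType) (P : R -> Prop) (m : R) : Prop :=
  P m /\ forall e, P e -> m <= e.

Definition Hmat (R : pzRingType) (n : nat) (A B C Y : 'M[R]_n)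
  : 'M[R]_(n * n, n * n + (n * n + n * n)) :=
  row_mx (kron Y^T 1%:M *m diagv (vec A))
    (row_mx (kron 1%:M Y^T *m vecperm R n *m diagv (vec B)) (- diagv (vec C))).

Lemma vidxK (m n : nat) (i : 'I_m) (j : 'I_n) : vidx (mxvec_index i j) = (i, j).
Proof. by rewrite /vidx /mxvec_index cast_ordK enum_rankK. Qed.

Lemma vidx_inj (m n : nat) : injective (@vidx m n).
Proof. by move=> x y /(can_inj enum_valK)/(can_inj (@cast_ordKV _ _ _)). Qed.

Lemma vecE (R : Type) (m n : nat) (M : 'M[R]_(m, n)) (x : 'I_(n * m)) :
  vec M x 0 = M (vidx x).2 (vidx x).1.
Proof. by case/mxvec_indexP: x => i j; rewrite /vec mxE mxvecE vidxK mxE. Qed.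

Lemma vecpermP (R : pzRingType) (n : nat) (M : 'M[R]_n) :
  vecperm R n *m vec M = vec M^T.
Proof.
apply/colP=> x; rewrite !mxE (bigD1 (mxvec_index (vidx x).2 (vidx x).1)) //=.
rewrite big1 ?addr0.
  rewrite !mxE vidxK /= -surjective_pairing eqxx mul1r mxvecE mxE.
  by have := vecE M^T x; rewrite /vec mxE => ->; rewrite mxE.
move=> y hy; rewrite !mxE; case: eqP => [E|]; last by rewrite mul0r.
case/eqP: hy; apply: vidx_inj; rewrite vidxK E /=.
by case: (vidx y).
Qed.

From HB Require Import structures.
From mathcomp Require Import all_boot all_order all_algebra.
From mathcomp Require Import lra ring.
Set Implicit Arguments. Unset Strict Implicit. Unset Printing Implicit Defensive.
Import Order.TTheory GRing.Theory Num.Theory.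
Local Open Scope ring_scope.

(* Writing the perturbations as dA = A o EA, dB = B o EB, dC = C o EC (entrywise
   products), eps is feasible exactly when H [vec EA; vec EB; vec EC] = r has a
   solution of max-norm at most eps, so mu(Y) is the least max-norm of a solution
   of H x = r.  From H^T = Q [R; 0], the vector Q [R^-T r; 0] is the least
   2-norm solution of H x = r: it is feasible (mu <= mubar), and its 2-norm is
   at most that of an optimal x, which is at most sqrt(3 n^2) mu; finally the
   max-norm is dominated by the 2-norm. *)

Section Vectorization.
Variable R : comPzRingType.
Variable n : nat.
Implicit Types M N Y : 'M[R]_n.

Lemma sum_mxvec_index (F : 'I_(n * n) -> R) :
  \sum_k F k = \sum_i \sum_j F (mxvec_index i j).
Proof.
rewrite pair_big /= (reindex (uncurry (@mxvec_index n n))) //=.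
  by apply: eq_bigr => -[i j].
by case: (curry_mxvec_bij n n) => g h1 h2; exists g => x _; [apply: h1|apply: h2].
Qed.

Lemma kron_trmx1_vec Y M : kron Y^T 1%:M *m vec M = vec (M *m Y).
Proof.
apply/colP => x; case/mxvec_indexP: x => j i.
rewrite mxE vecE vidxK /= mxE sum_mxvec_index; apply: eq_bigr => k _.
rewrite (bigD1 i) //= big1 ?addr0.
  by rewrite vecE vidxK /= !mxE !vidxK /= eqxx mulr1 mulrC.
by move=> l hl; rewrite vecE vidxK /= !mxE !vidxK /= eq_sym (negPf hl) mulr0 mul0r.
Qed.

Lemma kron_1trmx_vec Y M : kron 1%:M Y^T *m vec M = vec (Y^T *m M).
Proof.
apply/colP => x; case/mxvec_indexP: x => j i.
rewrite mxE vecE vidxK /= mxE sum_mxvec_index.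
rewrite (bigD1 j) //= [X in _ + X]big1 ?addr0.
  by apply: eq_bigr => l _; rewrite vecE vidxK /= !mxE !vidxK /= eqxx mul1r.
move=> k hk; apply: big1 => l _.
by rewrite vecE vidxK /= !mxE !vidxK /= eq_sym (negPf hk) !mul0r.
Qed.

Definition unvec (a : 'cV[R]_(n * n)) : 'M[R]_n :=
  \matrix_(i, j) a (mxvec_index j i) 0.

Lemma unvecK : cancel unvec (@vec R n n).
Proof.
move=> a; apply/matrixP => x y; rewrite (ord1 y).
by case/mxvec_indexP: x => j i; rewrite vecE vidxK /= mxE.
Qed.

Lemma vec_inj : injective (@vec R n n).
Proof.
move=> M N h; apply/matrixP => i j.
by have := congr1 (fun v : 'cV[R]_(n * n) => v (mxvec_index j i) 0) h; rewrite /= !vecE vidxK.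
Qed.

Lemma vecD M N : vec (M + N) = vec M + vec N.
Proof. by apply/colP => x; rewrite [RHS]mxE !vecE mxE. Qed.

Lemma vecN M : vec (- M) = - vec M.
Proof. by apply/colP => x; rewrite [RHS]mxE !vecE mxE. Qed.

Definition hadmx M N : 'M[R]_n := \matrix_(i, j) (M i j * N i j).

Lemma diagv_vec M N : diagv (vec M) *m vec N = vec (hadmx M N).
Proof.
apply/colP => x; rewrite /diagv mul_diag_mx mxE [(vec M)^T _ _]mxE.
by rewrite !vecE mxE.
Qed.

Lemma Hmat_mul_vec A B C Y EA EB EC :
  Hmat A B C Y *m col_mx (vec EA) (col_mx (vec EB) (vec EC)) =
  vec (hadmx A EA *m Y + Y^T *m (hadmx B EB)^T - hadmx C EC).
Proof.
rewrite /Hmat !mul_row_col -!mulmxA !diagv_vec kron_trmx1_vec vecpermP.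
by rewrite kron_1trmx_vec mulNmx diagv_vec !vecD vecN addrA.
Qed.

End Vectorization.

Section MaxNorm.
Variable R : realDomainType.
Variable k : nat.
Implicit Type v : 'cV[R]_k.

Lemma norminf_ge0 v : 0 <= norminf v.
Proof.
apply: (big_ind (fun x => 0 <= x)) => // x y hx hy.
by rewrite le_max hx.
Qed.

Lemma ler_norminf v i : `|v i 0| <= norminf v.
Proof. by rewrite /norminf (bigD1 i) //= le_max lexx. Qed.

Lemma norminf_le v e : 0 <= e -> (forall i, `|v i 0| <= e) -> norminf v <= e.
Proof.
move=> he h; apply: (big_ind (fun x => x <= e)) => // x y hx hy.
by rewrite ge_max hx hy.
Qed.

End MaxNorm.

Lemma col_mx_norm_le (R : numDomainType) k1 k2 (u : 'cV[R]_k1) (v : 'cV[R]_k2) e :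
  (forall i, `|u i 0| <= e) -> (forall i, `|v i 0| <= e) ->
  forall i, `|col_mx u v i 0| <= e.
Proof.
move=> hu hv i; rewrite -(splitK i); case: (split i) => j /=.
  by rewrite col_mxEu.
by rewrite col_mxEd.
Qed.

Section BackwardError.
Variable R : realFieldType.
Variable n : nat.
Variables A B C Y : 'M[R]_n.

Let H := Hmat A B C Y.
Let r := vec (C - A *m Y - Y^T *m B^T).

Lemma feasible_of_solution (x : 'cV[R]_(n * n + (n * n + n * n))) e :
  0 <= e -> H *m x = r -> (forall i, `|x i 0| <= e) -> feasible A B C Y e.
Proof.
move=> he hx hb.
set a := usubmx x; set b := usubmx (dsubmx x); set c := dsubmx (dsubmx x).
have xE : x = col_mx (vec (unvec a)) (col_mx (vec (unvec b)) (vec (unvec c))).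
  by rewrite !unvecK !vsubmxK.
move: hx; rewrite xE /H Hmat_mul_vec => /vec_inj hx.
split=> //; exists (hadmx A (unvec a)), (hadmx B (unvec b)), (hadmx C (unvec c)).
split.
  rewrite mulmxDl linearD /= mulmxDr; apply/matrixP => i j.
  by have := congr1 (fun M : 'M[R]_n => M i j) hx; rewrite /= !mxE => h; lra.
by split; [|split] => i j; rewrite !mxE normrM mulrC ler_wpM2r // !mxE hb.
Qed.

Lemma solution_of_feasible e : feasible A B C Y e ->
  exists x : 'cV[R]_(n * n + (n * n + n * n)),
    H *m x = r /\ forall i, `|x i 0| <= e.
Proof.
move=> [he [dA [dB [dC [heq [hA [hB hC]]]]]]].
pose rel (M dM : 'M[R]_n) := \matrix_(i, j) (dM i j / M i j).
(* a zero entry of M forces the same entry of dM to vanish, so x / 0 = 0 is harmless *)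
have hadmx_rel (M dM : 'M[R]_n) : (forall i j, `|dM i j| <= e * `|M i j|) ->
    hadmx M (rel M dM) = dM.
  move=> h; apply/matrixP=> i j; rewrite !mxE.
  have [M0|nz] := eqVneq (M i j) 0; last by rewrite mulrC divfK.
  by have := h i j; rewrite M0 normr0 mulr0 normr_le0 => /eqP ->; rewrite mul0r.
have rel_le (M dM : 'M[R]_n) : (forall i j, `|dM i j| <= e * `|M i j|) ->
    forall l, `|vec (rel M dM) l 0| <= e.
  move=> h l; rewrite vecE mxE.
  have [M0|nz] := eqVneq (M (vidx l).2 (vidx l).1) 0.
    by rewrite M0 invr0 mulr0 normr0.
  by rewrite normrM normfV ler_pdivrMr ?normr_gt0 // h.
exists (col_mx (vec (rel A dA)) (col_mx (vec (rel B dB)) (vec (rel C dC)))).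
split; last by apply: col_mx_norm_le; [|apply: col_mx_norm_le]; apply: rel_le.
rewrite /H Hmat_mul_vec !hadmx_rel //; congr vec.
move: heq; rewrite mulmxDl linearD /= mulmxDr => heq; apply/matrixP => i j.
by have := congr1 (fun M : 'M[R]_n => M i j) heq; rewrite /= !mxE => h; lra.
Qed.

End BackwardError.

Section EuclideanNorm.
Variable R : realDomainType.

Definition sqnorm k (v : 'cV[R]_k) : R := \sum_i v i 0 ^+ 2.

Lemma sqnorm_ge0 k (v : 'cV[R]_k) : 0 <= sqnorm v.
Proof. by apply: sumr_ge0 => i _; rewrite sqr_ge0. Qed.

Lemma sqnormE k (v : 'cV[R]_k) : sqnorm v = (v^T *m v) 0 0.
Proof. by rewrite mxE; apply: eq_bigr => i _; rewrite mxE expr2. Qed.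

Lemma sqnorm_orthomx k (Q : 'M[R]_k) (v : 'cV[R]_k) :
  Q^T *m Q = 1%:M -> sqnorm (Q *m v) = sqnorm v.
Proof. by move=> h; rewrite !sqnormE trmx_mul mulmxA -(mulmxA v^T) h mulmx1. Qed.

Lemma sqnorm_col_mx k1 k2 (u : 'cV[R]_k1) (v : 'cV[R]_k2) :
  sqnorm (col_mx u v) = sqnorm u + sqnorm v.
Proof.
rewrite /sqnorm big_split_ord /=; congr (_ + _); apply: eq_bigr => i _.
  by rewrite col_mxEu.
by rewrite col_mxEd.
Qed.

Lemma sqnorm0 k : sqnorm (0 : 'cV[R]_k) = 0.
Proof. by rewrite /sqnorm big1 // => i _; rewrite mxE expr0n. Qed.

Lemma sqnorm_le_sqr_bound k (v : 'cV[R]_k) e :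
  (forall i, `|v i 0| <= e) -> sqnorm v <= k%:R * e ^+ 2.
Proof.
move=> h; apply: (@le_trans _ _ (\sum_(i < k) e ^+ 2)).
  by apply: ler_sum => i _; rewrite -real_normK ?num_real // !expr2 ler_pM.
by rewrite sumr_const card_ord mulr_natl.
Qed.

End EuclideanNorm.

Lemma norminf_le_sqrt_sqnorm (F : rcfType) k (v : 'cV[F]_k) :
  norminf v <= Num.sqrt (sqnorm v).
Proof.
apply: norminf_le => [|i]; first exact: sqrtr_ge0.
rewrite -sqrtr_sqr ler_wsqrtr // /sqnorm (bigD1 i) //= lerDl.
by apply: sumr_ge0 => j _; exact: sqr_ge0.
Qed.

Section LeastNormSolution.
Variable F : fieldType.
Variables m p : nat.
Variable H : 'M[F]_(m, m + p).
Variable Q : 'M[F]_(m + p).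
Variable Rt : 'M[F]_m.
Hypothesis orthoQ : Q^T *m Q = 1%:M.
Hypothesis H_QR : H^T = Q *m col_mx Rt 0.

Lemma H_QR_tr : H = row_mx Rt^T 0 *m Q^T.
Proof. by rewrite -[H]trmxK H_QR trmx_mul tr_col_mx trmx0. Qed.

Lemma QR_factor_unitmx : \rank H = m -> Rt^T \in unitmx.
Proof.
move=> rankH; rewrite unitmx_tr -row_free_unit /row_free eqn_leq rank_leq_row /=.
rewrite -{1}rankH H_QR_tr; apply: leq_trans (mxrankM_maxl _ _) _.
have -> : row_mx Rt^T (0 : 'M[F]_(m, p)) = Rt^T *m row_mx 1%:M 0.
  by rewrite mul_mx_row mulmx1 mulmx0.
by apply: leq_trans (mxrankM_maxl _ _) _; rewrite mxrank_tr.
Qed.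

Hypothesis unitRt : Rt^T \in unitmx.

Lemma QR_solution (b : 'cV[F]_m) : H *m (Q *m col_mx (invmx Rt^T *m b) 0) = b.
Proof.
have HQ : H *m Q = row_mx Rt^T 0 by rewrite H_QR_tr -mulmxA orthoQ mulmx1.
by rewrite mulmxA HQ mul_row_col mul0mx addr0 mulKVmx.
Qed.

Lemma QR_solution_coords (x : 'cV[F]_(m + p)) :
  usubmx (Q^T *m x) = invmx Rt^T *m (H *m x).
Proof.
rewrite H_QR_tr -mulmxA -[Q^T *m x in RHS]vsubmxK mul_row_col mul0mx addr0.
by rewrite mulKmx.
Qed.

End LeastNormSolution.

Lemma QR_solution_min_sqnorm (F : realFieldType) m p (H : 'M[F]_(m, m + p))
    (Q : 'M[F]_(m + p)) (Rt : 'M[F]_m) (x : 'cV[F]_(m + p)) :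
  Q^T *m Q = 1%:M -> H^T = Q *m col_mx Rt 0 -> Rt^T \in unitmx ->
  sqnorm (Q *m col_mx (invmx Rt^T *m (H *m x)) 0) <= sqnorm x.
Proof.
move=> orthoQ H_QR unitRt.
have orthoQt : Q^T^T *m Q^T = 1%:M by rewrite trmxK; apply: mulmx1C.
rewrite sqnorm_orthomx // -(sqnorm_orthomx x orthoQt) -[Q^T *m x]vsubmxK.
rewrite -(QR_solution_coords H_QR unitRt) !sqnorm_col_mx sqnorm0 lerD2l.
exact: sqnorm_ge0.
Qed.

Theorem theorem2p1 (R : rcfType) (n : nat) (A B C Y : 'M[R]_n)
  (Q : 'M[R]_(n * n + (n * n + n * n))) (Rt : 'M[R]_(n * n)) (mu : R) :
  \rank (Hmat A B C Y) = (n * n)%N ->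
  Q^T *m Q = 1%:M ->
  (forall i j : 'I_(n * n), (j < i)%N -> Rt i j = 0) ->
  (Hmat A B C Y)^T = Q *m col_mx Rt 0 ->
  is_min (feasible A B C Y) mu ->
  let r := vec (C - A *m Y - Y^T *m B^T) in
  let z1 := invmx Rt^T *m r in
  let mubar := norminf (Q *m col_mx z1 0) in
  mu <= mubar /\ mubar <= Num.sqrt 3 * n%:R * mu.
Proof.
move=> rankH orthoQ _ H_QR [feas_mu mu_min] r z1 mubar.
have unitRt := QR_factor_unitmx H_QR rankH.
have Hz : Hmat A B C Y *m (Q *m col_mx z1 0) = r by exact: QR_solution.
split.
  apply: mu_min; apply: (feasible_of_solution (norminf_ge0 _) Hz).
  exact: ler_norminf.
have mu_ge0 : 0 <= mu by case: feas_mu.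
have [x [Hx x_le]] := solution_of_feasible feas_mu.
have z_le_x := QR_solution_min_sqnorm x orthoQ H_QR unitRt.
rewrite Hx -/z1 in z_le_x.
apply: le_trans (norminf_le_sqrt_sqnorm _) _; apply: le_trans (ler_wsqrtr z_le_x) _.
apply: le_trans (ler_wsqrtr (sqnorm_le_sqr_bound x_le)) _.
have -> : ((n * n + (n * n + n * n))%:R * mu ^+ 2 : R) = 3 * (n%:R * mu) ^+ 2.
  by rewrite !natrD !natrM exprMn; ring.
by rewrite sqrtrM ?ler0n // sqrtr_sqr ger0_norm ?mulr_ge0 ?ler0n // mulrA.
Qed.
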